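(* Let $X,a,b$ be variables, let $C_k=\frac1{k+1}\binom{2k}{k}$ denote the Catalan numbers, and let $U_n(x)$ be the Chebyshev polynomials of the second kind, defined by $\sum_{n\ge0}U_n(x)z^n=\frac1{1-2xz+z^2}$, with $U_{-1}(x)=0$. Then for all positive integers $n$, $$\det_{0\le i,j\le n-1}\left(X(-2a)^{i+j+1}+\sum_{k=0}^{\lfloor(i+j)/2\rfloor}(-2a)^{i+j-2k}C_k-b\Big(X(-2a)^{i+j}+\sum_{k=0}^{\lfloor(i+j-1)/2\rfloor}(-2a)^{i+j-2k-1}C_k\Big)\right)$$ $$=U_{n-1}(b/2)\big(XU_n(-a)+U_{n-1}(-a)\big)-U_n(b/2)\big(XU_{n-1}(-a)+U_{n-2}(-a)\big).$$
   Context: An empty sum equals $0$. *)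

From HB Require Import structures.
From mathcomp Require Import all_boot all_order all_algebra.
Set Implicit Arguments. Unset Strict Implicit. Unset Printing Implicit Defensive.
Import Order.TTheory GRing.Theory Num.Theory.
Local Open Scope ring_scope.

Definition catalan (k : nat) : nat := ('C(k.*2, k) %/ k.+1)%N.

(* Chebyshev polynomials of the second kind evaluated at x, via the
   recurrence equivalent to sum_n U_n(x) z^n = 1/(1 - 2xz + z^2):
   U_0 = 1, U_1 = 2x, U_{n+2} = 2x U_{n+1} - U_n. *)
Fixpoint chebU_pair {R : ringType} (x : R) (n : nat) : R * R :=
  match n with
  | 0 => (1, 2%:R * x)
  | m.+1 => let p := chebU_pair x m in (p.2, 2%:R * x * p.2 - p.1)
  end.

Definition chebU {R : ringType} (n : nat) (x : R) : R := (chebU_pair x n).1.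

(* chebUm1 n x = U_{n-1}(x), with the convention U_{-1}(x) = 0. *)
Definition chebUm1 {R : ringType} (n : nat) (x : R) : R :=
  if n is k.+1 then chebU k x else 0.

From HB Require Import structures.
From mathcomp Require Import all_boot all_order all_algebra.
From mathcomp Require Import ring zify.
Set Implicit Arguments. Unset Strict Implicit. Unset Printing Implicit Defensive.
Import Order.TTheory GRing.Theory Num.Theory.
Local Open Scope ring_scope.

(* The moments C_(k/2) (zero for odd k) define a linear functional L on R[x]
   for which the monic Chebyshev polynomials S_n(x) = U_n(x/2) are
   orthonormal.  With c = -2a, the matrix entries are m_(i+j+1) - b m_(i+j),
   where m_N are the moments of the functional Λ with Λ(1) = X and
   Λ((x - c) q) = L(q); so the matrix is the Gram matrix of
   (p, q) |-> Λ(p q (x - b)) in the monomial basis.  Passing to the monic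
   bases S_i (rows) and s_j with (x - b) s_j = (x - c) S_j + (c - b) S_j(b)
   (columns) does not change the determinant and turns the matrix into the
   identity plus the rank-one matrix ((c - b) Λ(S_i) S_j(b))_(i,j).  Since
   S_i(b) and Λ(S_i) satisfy the Chebyshev recurrence with parameters b and c,
   the resulting sum 1 + (c - b) Σ_i S_i(b) Λ(S_i) telescopes to the
   Casoratian S_(n-1)(b) Λ(S_n) - S_n(b) Λ(S_(n-1)). *)

Section ChebyshevS.
Variable R : nzRingType.

Fixpoint chebS_pair (t : R) (n : nat) : R * R :=
  if n is m.+1 then let p := chebS_pair t m in (p.2, t * p.2 - p.1) else (1, t).

Definition chebS (n : nat) (t : R) : R := (chebS_pair t n).1.

Lemma chebS_rec n (t : R) : chebS n.+2 t = t * chebS n.+1 t - chebS n t.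
Proof. by []. Qed.

Lemma eq_chebyshev_rec (t : R) (f g : nat -> R) :
    (forall n, f n.+2 = t * f n.+1 - f n) -> (forall n, g n.+2 = t * g n.+1 - g n) ->
  f 0 = g 0 -> f 1 = g 1 -> f =1 g.
Proof.
move=> fS gS f0 f1; suff fg n : f n = g n /\ f n.+1 = g n.+1 by move=> n; case: (fg n).
by elim: n => [|n [IH0 IH1]]; split; rewrite ?fS ?gS ?IH0 ?IH1.
Qed.

Lemma chebUE n (x : R) : chebU n x = chebS n (2%:R * x).
Proof.
exact: (@eq_chebyshev_rec _ (fun n => chebU n x) (fun n => chebS n (2%:R * x))).
Qed.

Lemma chebUm1_rec n (x : R) : chebUm1 n.+2 x = 2%:R * x * chebUm1 n.+1 x - chebUm1 n x.
Proof. by case: n => [|n] //=; rewrite /chebU /= mulr1 subr0. Qed.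

End ChebyshevS.

Section ChebyshevSPoly.
Variable R : nzRingType.

Lemma size_chebSX n : size (chebS n 'X : {poly R}) = n.+1.
Proof.
elim/ltn_ind: n => -[|[|n]] IH; rewrite ?size_poly1 ?size_polyX //.
have nz : chebS n.+1 'X != 0 :> {poly R} by rewrite -size_poly_eq0 IH.
by rewrite chebS_rec -commr_polyX size_polyDl size_mulX ?size_opp ?IH // ltnS leqW.
Qed.

Lemma chebSX_monic n : (chebS n 'X : {poly R}) \is monic.
Proof.
elim/ltn_ind: n => -[|[|n]] IH; rewrite ?monic1 ?monicX //.
rewrite chebS_rec -commr_polyX monicE lead_coefDl ?lead_coefMX ?(eqP (IH _ _)) //.
by rewrite size_mulX ?size_opp ?size_chebSX // -size_poly_eq0 size_chebSX.
Qed.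

End ChebyshevSPoly.

Lemma horner_chebS (R : comNzRingType) n (b : R) : (chebS n 'X).[b] = chebS n b.
Proof.
move: n; apply: (@eq_chebyshev_rec _ b (fun n => (chebS n 'X).[b]) (fun n => chebS n b)).
- by move=> k /=; rewrite chebS_rec hornerD hornerN hornerM hornerX.
- by move=> k.
- by rewrite /chebS /= hornerC.
- by rewrite /chebS /= hornerX.
Qed.

Section MomentFunctional.
Variables (R : comNzRingType) (m : nat -> R).

Definition moment_fun (q : {poly R}) : R := \sum_(i < size q) q`_i * m i.

Lemma moment_funE N (q : {poly R}) :
  (size q <= N)%N -> moment_fun q = \sum_(i < N) q`_i * m i.
Proof.
move=> hq; rewrite /moment_fun -(subnKC hq) big_split_ord /=.
rewrite [X in _ + X]big1 ?addr0 // => i _.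
by rewrite nth_default ?mul0r // leq_addr.
Qed.

Lemma moment_fun_is_scalar : scalar moment_fun.
Proof.
move=> a p q; pose N := maxn (size p) (size q).
have hpq : (size (a *: p + q)%R <= N)%N.
  apply: leq_trans (size_polyD _ _) _; rewrite geq_max leq_maxr andbT.
  exact: leq_trans (size_scale_leq a p) (leq_maxl _ _).
rewrite !(moment_funE (N := N)) ?leq_maxl ?leq_maxr // mulr_sumr -big_split.
by apply: eq_bigr => i _; rewrite coefD coefZ mulrDl mulrA.
Qed.

HB.instance Definition _ :=
  GRing.isLinear.Build R {poly R} R *%R moment_fun moment_fun_is_scalar.

Lemma moment_fun_Xn k : moment_fun 'X^k = m k.
Proof.
rewrite /moment_fun size_polyXn big_ord_recr /= coefXn eqxx mul1r big1 ?add0r //.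
by move=> i _; rewrite coefXn ltn_eqF ?mul0r.
Qed.

Lemma moment_fun_mull (p q : {poly R}) :
  moment_fun (p * q) = \sum_(i < size p) p`_i * moment_fun ('X^i * q).
Proof.
rewrite -{1}[p]coefK poly_def mulr_suml linear_sum.
by apply: eq_bigr => i _; rewrite -scalerAl linearZ.
Qed.

End MomentFunctional.

Lemma moment_fun_mulXsubC (R : comNzRingType) (m m' : nat -> R) b (q : {poly R}) :
    (forall N, m' N = m N.+1 - b * m N) ->
  moment_fun m (q * ('X - b%:P)) = moment_fun m' q.
Proof.
move=> m'E; rewrite moment_fun_mull; apply: eq_bigr => i _.
rewrite mulrBr -exprSr [_ * b%:P]mulrC mul_polyC linearB linearZ /=.
by rewrite !moment_fun_Xn m'E.
Qed.

Section SemicircleMoments.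
Variable R : comNzRingType.

Definition catalan_moment (k : nat) : R := if odd k then 0 else (catalan k./2)%:R.

Lemma catalan_binB k : (catalan k)%:R = 'C(k.*2, k)%:R - 'C(k.*2, k.+1)%:R :> R.
Proof.
have := mul_bin_left k.*2 k; rewrite -addnn addnK addnn => binE.
have le_bin : ('C(k.*2, k.+1) <= 'C(k.*2, k))%N by nia.
have binE' : 'C(k.*2, k) = (('C(k.*2, k) - 'C(k.*2, k.+1)) * k.+1)%N by nia.
by rewrite /catalan {1}binE' mulnK // natrB.
Qed.

Definition ballot (k i : nat) : R :=
  if odd (k + i) then 0 else 'C(k, (k + i)./2)%:R - 'C(k, ((k + i)./2).+1)%:R.

Lemma ballot_rec k i : ballot k i.+2 = ballot k.+1 i.+1 - ballot k i.
Proof.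
rewrite /ballot !addnS !addSn /= negbK.
by case: (odd (k + i)); rewrite ?subr0 // !binS !natrD; ring.
Qed.

Lemma ballot0 k : ballot k 0 = catalan_moment k.
Proof.
rewrite /ballot /catalan_moment addn0.
have := odd_double_half k; case: (odd k) => //; move: (k./2) => j <-.
by rewrite add0n catalan_binB.
Qed.

Lemma ballot1 k : ballot k 1 = catalan_moment k.+1.
Proof.
rewrite /ballot /catalan_moment addn1 /=.
have := odd_double_half k; case: (odd k) => //=; move: (k./2) => j <-.
rewrite add1n /= doubleK catalan_binB doubleS (binS j.*2.+1 j) (binS j.*2.+1 j.+1).
have binC : 'C(j.*2.+1, j) = 'C(j.*2.+1, j.+1).
  by rewrite -bin_sub; [congr 'C(_, _); rewrite -addnn; lia | lia].
by rewrite binC !natrD; ring.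
Qed.

Lemma ballot_small k i : (k < i)%N -> ballot k i = 0.
Proof.
move=> lt_ki; rewrite /ballot; case: ifP => // /negbT even_ki.
have : (k < (k + i)./2)%N.
  by have := odd_double_half (k + i); rewrite (negbTE even_ki) add0n -addnn; lia.
by move=> lt_k_half; rewrite !bin_small ?subr0 // ltnW.
Qed.

Lemma ballot_diag i : ballot i i = 1.
Proof. by rewrite /ballot addnn odd_double doubleK binn bin_small // subr0. Qed.

Lemma moment_fun_Xn_chebS k i :
  moment_fun catalan_moment ('X^k * chebS i 'X) = ballot k i.
Proof.
elim/ltn_ind: i k => -[|[|i]] IH k.
- by rewrite mulr1 moment_fun_Xn ballot0.
- by rewrite -exprSr moment_fun_Xn ballot1.
rewrite chebS_rec mulrBr mulrA -exprSr linearB /= !IH //.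
by rewrite ballot_rec.
Qed.

Lemma chebSX_orthonormal i j :
  moment_fun catalan_moment (chebS i 'X * chebS j 'X) = (i == j)%:R.
Proof.
wlog le_ij : i j / (i <= j)%N.
  by move=> H; case: (leqP i j) => [/H //|/ltnW/H]; rewrite mulrC eq_sym.
rewrite moment_fun_mull size_chebSX big_ord_recr /= big1 => [|k _]; last first.
  by rewrite moment_fun_Xn_chebS ballot_small ?mulr0 // (leq_trans (ltn_ord k)).
have := chebSX_monic R i; rewrite monicE lead_coefE size_chebSX => /eqP ->.
rewrite add0r mul1r moment_fun_Xn_chebS.
by case: ltngtP le_ij => // [/ballot_small -> | ->] _; rewrite ?ballot_diag.
Qed.

End SemicircleMoments.

Section HankelDeterminants.
Variable R : comNzRingType.

Lemma det_hankel_monic_basis n (m : nat -> R) (r s : nat -> {poly R}) :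
    (forall i, r i \is monic) -> (forall i, size (r i) = i.+1) ->
    (forall j, s j \is monic) -> (forall j, size (s j) = j.+1) ->
  \det (\matrix_(i < n, j < n) moment_fun m (r i * s j))
  = \det (\matrix_(i < n, j < n) m (i + j)%N).
Proof.
move=> r_monic r_size s_monic s_size.
have coef_deg (p : {poly R}) i : p \is monic -> size p = i.+1 -> p`_i = 1.
  by move=> /monicP; rewrite lead_coefE => + p_size; rewrite p_size.
have expand (p : {poly R}) (i : 'I_n) : size p = i.+1 -> p = \sum_(k < n) p`_k *: 'X^k.
  by move=> p_size; rewrite -poly_def -/(take_poly n p) take_poly_id // p_size.
pose A := \matrix_(i < n, k < n) (r i)`_k.
pose B := \matrix_(k < n, j < n) (s j)`_k.
have -> : \matrix_(i < n, j < n) moment_fun m (r i * s j)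
          = A *m \matrix_(i < n, j < n) m (i + j)%N *m B.
  apply/matrixP => i j; rewrite !mxE (expand _ i (r_size i)) (expand _ j (s_size j)).
  under [RHS]eq_bigr do rewrite mxE mulr_suml.
  rewrite exchange_big mulr_suml linear_sum; apply: eq_bigr => k _.
  rewrite mulr_sumr linear_sum; apply: eq_bigr => l _.
  by rewrite -scalerAl -scalerAr !linearZ /= -exprD moment_fun_Xn !mxE mulrA mulrAC.
have detA : \det A = 1.
  rewrite det_trig ?big1 // => [i _|]; first by rewrite mxE coef_deg.
  by apply/is_trig_mxP => i k lt_ik; rewrite mxE nth_default ?r_size.
have detB : \det B = 1.
  rewrite -det_tr det_trig ?big1 // => [j _|]; first by rewrite !mxE coef_deg.
  by apply/is_trig_mxP => j k lt_jk; rewrite !mxE nth_default ?s_size.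
by rewrite !det_mulmx detA detB mul1r mulr1.
Qed.

Lemma det_add_rank1 n (u : 'cV[R]_n) (v : 'rV[R]_n) :
  \det (1%:M + u *m v) = 1 + (v *m u) 0 0.
Proof.
have blockE : block_mx 1%:M 0 (- v) 1%:M *m block_mx 1%:M u 0 (1%:M + v *m u)
            = block_mx (1%:M + u *m v) u 0 1%:M *m block_mx 1%:M 0 (- v) 1%:M.
  rewrite !mulmx_block !mulmx1 !mul1mx !mulmx0 !mul0mx !addr0 !add0r.
  by rewrite mulNmx mulmxN addrA addrK addrAC addNr add0r.
have := congr1 determinant blockE.
rewrite !det_mulmx !det_lblock !det_ublock !det1 !mul1r !mulr1 => <-.
by rewrite det_mx11 !mxE eqxx.
Qed.

End HankelDeterminants.

Lemma casoratian_telescope (R : comNzRingType) (b c : R) (P f : nat -> R) :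
    (forall i, P i.+2 = b * P i.+1 - P i) -> (forall i, f i.+2 = c * f i.+1 - f i) ->
    P 0 = 1 -> P 1 = b -> f 1 = c * f 0 + 1 ->
  forall n, 1 + \sum_(i < n.+1) P i * ((c - b) * f i) = P n * f n.+1 - P n.+1 * f n.
Proof.
move=> PS fS P0 P1 f1; elim=> [|n IH]; first by rewrite big_ord1 P0 P1 f1; ring.
by rewrite big_ord_recr addrA IH PS fS; ring.
Qed.

Section ShiftedMoments.
Variables (R : comNzRingType) (X c : R).

Definition shift_moment (N : nat) : R :=
  X * c ^+ N + \sum_(k < N.+1./2) c ^+ (N.-1 - k.*2) * (catalan k)%:R.

Lemma shift_momentS N : shift_moment N.+1 = c * shift_moment N + catalan_moment R N.
Proof.
rewrite /shift_moment mulrDr mulrCA -exprS -addrA; congr (_ + _).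
have -> : c * \sum_(k < N.+1./2) c ^+ (N.-1 - k.*2) * (catalan k)%:R
          = \sum_(k < N.+1./2) c ^+ (N - k.*2) * (catalan k)%:R.
  rewrite mulr_sumr; apply: eq_bigr => k _; rewrite mulrA -exprS.
  have lt_2k_N : (k.*2 < N)%N by rewrite -gtn_uphalf_double uphalfE.
  by congr (c ^+ _ * _); lia.
rewrite -[N.+1./2]/(uphalf N) uphalf_half -[N.+2./2]/(N./2).+1 /catalan_moment.
case: (boolP (odd N)) => [_ | evenN]; first by rewrite addr0 add1n.
by rewrite add0n big_ord_recr /= (even_halfK evenN) subnn expr0 mul1r.
Qed.

Lemma shift_moment0 : shift_moment 0 = X.
Proof. by rewrite /shift_moment big_ord0 expr0 mulr1 addr0. Qed.

Lemma moment_fun_shift_mulXsubC q :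
  moment_fun shift_moment (q * ('X - c%:P)) = moment_fun (catalan_moment R) q.
Proof. by apply: moment_fun_mulXsubC => N; rewrite shift_momentS addrAC subrr add0r. Qed.

Lemma moment_fun_shift_chebS_rec k :
  moment_fun shift_moment (chebS k.+2 'X)
  = c * moment_fun shift_moment (chebS k.+1 'X) - moment_fun shift_moment (chebS k 'X).
Proof.
have XE : 'X * chebS k.+1 'X = chebS k.+1 'X * ('X - c%:P) + c *: chebS k.+1 'X.
  by rewrite -mul_polyC; ring.
rewrite chebS_rec XE linearB linearD linearZ /= moment_fun_shift_mulXsubC.
by rewrite -[q in moment_fun (catalan_moment R) q]mulr1 (chebSX_orthonormal _ k.+1 0) add0r.
Qed.

Lemma moment_fun_shift_chebU (x : R) k :
    c = 2%:R * x ->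
  moment_fun shift_moment (chebS k 'X) = X * chebU k x + chebUm1 k x.
Proof.
move=> cE; move: k; apply: (@eq_chebyshev_rec _ c) => [k|k||].
- exact: moment_fun_shift_chebS_rec.
- have chebU_rec : chebU k.+2 x = c * chebU k.+1 x - chebU k x by rewrite cE.
  by rewrite chebU_rec chebUm1_rec -cE; ring.
- by rewrite -[chebS 0 'X](expr0 'X) moment_fun_Xn shift_moment0 /chebU /= mulr1 addr0.
rewrite -[chebS 1 'X](expr1 'X) moment_fun_Xn shift_momentS shift_moment0 cE.
by rewrite /catalan_moment /catalan /= bin0 divn1 /chebU /=; ring.
Qed.

End ShiftedMoments.

Section Cobasis.
Variables (R : fieldType) (b c : R).

Definition cobasis_num (j : nat) : {poly R} :=
  ('X - c%:P) * chebS j 'X + ((c - b) * chebS j b)%:P.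

Definition cobasis (j : nat) : {poly R} := cobasis_num j %/ ('X - b%:P).

Lemma size_XsubC_chebSX j : size (('X - c%:P) * chebS j 'X) = j.+2.
Proof.
rewrite size_monicM ?monicXsubC ?size_XsubC ?size_chebSX //.
by rewrite -size_poly_eq0 size_chebSX.
Qed.

Lemma size_cobasis_num j : size (cobasis_num j) = j.+2.
Proof.
by rewrite size_polyDl size_XsubC_chebSX // (leq_ltn_trans (size_polyC_leq1 _)).
Qed.

Lemma cobasis_num_monic j : cobasis_num j \is monic.
Proof.
rewrite monicE lead_coefDl ?lead_coefM ?lead_coefXsubC ?mul1r.
  exact: chebSX_monic.
by rewrite size_XsubC_chebSX (leq_ltn_trans (size_polyC_leq1 _)).
Qed.

Lemma cobasisK j : cobasis j * ('X - b%:P) = cobasis_num j.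
Proof.
apply: divpK; rewrite dvdp_XsubCl /root /cobasis_num !hornerE horner_chebS.
by apply/eqP; ring.
Qed.

Lemma cobasis_monic j : cobasis j \is monic.
Proof. by rewrite -(monicMr _ (monicXsubC b)) cobasisK cobasis_num_monic. Qed.

Lemma size_cobasis j : size (cobasis j) = j.+1.
Proof.
have := size_Mmonic (monic_neq0 (cobasis_monic j)) (monicXsubC b).
by rewrite cobasisK size_cobasis_num size_XsubC addn2 => -[].
Qed.

Lemma moment_fun_shift_cobasis X i j :
  moment_fun (fun N => shift_moment X c N.+1 - b * shift_moment X c N)
    (chebS i 'X * cobasis j)
  = (i == j)%:R + (c - b) * moment_fun (shift_moment X c) (chebS i 'X) * chebS j b.
Proof.
rewrite -(moment_fun_mulXsubC (m := shift_moment X c) (b := b)) //.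
rewrite -[in LHS]mulrA cobasisK.
have -> : chebS i 'X * cobasis_num j
          = chebS i 'X * chebS j 'X * ('X - c%:P) + ((c - b) * chebS j b) *: chebS i 'X.
  by rewrite /cobasis_num -mul_polyC; ring.
by rewrite linearD linearZ /= moment_fun_shift_mulXsubC chebSX_orthonormal mulrAC.
Qed.

Lemma det_hankel_shift_moment X n :
  \det (\matrix_(i < n, j < n)
          (shift_moment X c (i + j).+1 - b * shift_moment X c (i + j)))
  = 1 + \sum_(i < n) chebS i b * ((c - b) * moment_fun (shift_moment X c) (chebS i 'X)).
Proof.
rewrite -(det_hankel_monic_basis n (fun N => shift_moment X c N.+1 - b * shift_moment X c N)
  (@chebSX_monic R) (@size_chebSX R) cobasis_monic size_cobasis).
have -> : \matrix_(i < n, j < n)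
     moment_fun (fun N => shift_moment X c N.+1 - b * shift_moment X c N)
       (chebS i 'X * cobasis j)
   = 1%:M + \col_i ((c - b) * moment_fun (shift_moment X c) (chebS i 'X))
            *m \row_j chebS j b.
  by apply/matrixP => i j; rewrite !mxE big_ord1 !mxE moment_fun_shift_cobasis.
by rewrite det_add_rank1 !mxE; under eq_bigr do rewrite !mxE.
Qed.

End Cobasis.

Lemma chebU_half (R : fieldType) (b : R) n :
  2%:R != 0 :> R -> chebU n (b / 2%:R) = chebS n b.
Proof. by move=> h2; rewrite chebUE mulrC divfK. Qed.

Theorem theorem15 (R : fieldType) (h2 : 2%:R != 0 :> R) (X a b : R)
    (n : nat) (hn : (0 < n)%N) :
  \det (\matrix_(i < n, j < n)
     (X * (- 2%:R * a) ^+ (i + j).+1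
      + \sum_(k < ((i + j)./2).+1) (- 2%:R * a) ^+ (i + j - k.*2) * (catalan k)%:R
      - b * (X * (- 2%:R * a) ^+ (i + j)
             + \sum_(k < ((i + j).+1)./2)
                 (- 2%:R * a) ^+ ((i + j).-1 - k.*2) * (catalan k)%:R)))
  = chebUm1 n (b / 2%:R) * (X * chebU n (- a) + chebUm1 n (- a))
    - chebU n (b / 2%:R) * (X * chebUm1 n (- a) + chebUm1 n.-1 (- a)).
Proof.
case: n hn => [//|n] _; set c := - 2%:R * a.
have cE : c = 2%:R * - a by rewrite /c mulrN mulNr.
pose phi k := moment_fun (shift_moment X c) (chebS k 'X).
have phiE k : phi k = X * chebU k (- a) + chebUm1 k (- a) := moment_fun_shift_chebU X k cE.
rewrite det_hankel_shift_moment.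
rewrite (casoratian_telescope (P := fun i => chebS i b) (f := phi)) //.
- by rewrite /= !chebU_half // !phiE.
- exact: moment_fun_shift_chebS_rec.
by rewrite !phiE /= /chebU /= cE; ring.
Qed.
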